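(* Let $X_0\in\mathcal{D}^0$. Then system (S) has a unique solution $X(t)=(B(t),I(t),M(t),N(t))$ defined on $[0,+\infty)$ with $X(0)=X_0$. Moreover $X(t)\in\mathcal{D}^0$ for every $t>0$, $$\frac{b}{m+\mu}\le \liminf_{t\to+\infty}\big(B(t)+I(t)\big)\le \limsup_{t\to+\infty}\big(B(t)+I(t)\big)\le \frac{b}{m},$$ and there is a constant $L>0$ (which may depend on $X_0$) such that $M(t)+N(t)\le L$ for all $t\ge 0$.
   Context: All parameters $b,\lambda,\gamma,m,\mu,r,n,p,h,\beta,\delta,e$ are positive constants. Here $B,I$ denote healthy and infected bees and $M,N$ healthy and infected mites. The model (S) is $$B'=\frac{bB}{B+I}-\lambda BN-\gamma BI-mB,\qquad I'=\frac{bI}{B+I}+\lambda BN+\gamma BI-(m+\mu)I,$$ $$M'=r(M+N)-nM-\frac{p}{h(B+I)}M(M+N)-M(\beta I+\delta N+eB),$$ $$N'=-nN-\frac{p}{h(B+I)}N(M+N)+\beta MI+\delta MN-eNB,$$ considered on the domain $\mathcal{D}^0=\{(B,I,M,N)\in\mathbb{R}^4_+ : B+I\neq 0\}$, where $\mathbb{R}_+=[0,\infty)$. *)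

From Stdlib Require Import Reals.
Open Scope R_scope.

Definition fB (b lam gam m : R) (B I M N : R) : R :=
  b * B / (B + I) - lam * B * N - gam * B * I - m * B.

Definition fI (b lam gam m mu : R) (B I M N : R) : R :=
  b * I / (B + I) + lam * B * N + gam * B * I - (m + mu) * I.

Definition fM (r n p h beta delta e : R) (B I M N : R) : R :=
  r * (M + N) - n * M - p / (h * (B + I)) * M * (M + N)
  - M * (beta * I + delta * N + e * B).

Definition fN (n p h beta delta e : R) (B I M N : R) : R :=
  - n * N - p / (h * (B + I)) * N * (M + N) + beta * M * I + delta * M * N
  - e * N * B.

Definition inD0 (B I M N : R) : Prop :=
  0 <= B /\ 0 <= I /\ 0 <= M /\ 0 <= N /\ B + I <> 0.

(* (B,I,M,N) is a solution of (S) on [0,+oo) with initial value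
   (B0,I0,M0,N0): it takes the initial value at t = 0, is right-continuous
   at 0, satisfies the ODE (two-sided derivative) at every t > 0, and stays
   in the open set {B + I <> 0} where the vector field is defined. *)
Definition is_solution
  (b lam gam m mu r n p h beta delta e : R)
  (B0 I0 M0 N0 : R) (B I M N : R -> R) : Prop :=
  B 0 = B0 /\ I 0 = I0 /\ M 0 = M0 /\ N 0 = N0 /\
  limit1_in B (fun t => 0 < t) B0 0 /\
  limit1_in I (fun t => 0 < t) I0 0 /\
  limit1_in M (fun t => 0 < t) M0 0 /\
  limit1_in N (fun t => 0 < t) N0 0 /\
  (forall t, 0 <= t -> B t + I t <> 0) /\
  (forall t, 0 < t ->
     derivable_pt_lim B t (fB b lam gam m (B t) (I t) (M t) (N t)) /\
     derivable_pt_lim I t (fI b lam gam m mu (B t) (I t) (M t) (N t)) /\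
     derivable_pt_lim M t (fM r n p h beta delta e (B t) (I t) (M t) (N t)) /\
     derivable_pt_lim N t (fN n p h beta delta e (B t) (I t) (M t) (N t))).

Definition liminf_ge (f : R -> R) (a : R) : Prop :=
  forall eps, 0 < eps -> exists T, forall t, T <= t -> a - eps <= f t.

Definition limsup_le (f : R -> R) (a : R) : Prop :=
  forall eps, 0 < eps -> exists T, forall t, T <= t -> f t <= a + eps.

(* The vector field of (S) is singular at B + I = 0 and grows quadratically, so we first solve a
   cut-off system, with the coordinates clipped to a box and B + I floored at a positive level: its field
   is bounded and globally Lipschitz, and Picard iteration gives a global solution. Barrier arguments show
   that this solution never reaches the region where the cut-off acts: the coordinates stay nonnegative,
   S = B + I stays between min(S(0), b/(m+mu)) and max(S(0), b/m) because S' = b - m S - mu I, and M + N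
   stays below the level at which the logistic loss p (M+N)^2 / (h S) beats the growth r (M+N). Hence it
   solves (S). Another solution agrees with it on a short interval after every common point, by local
   uniqueness for a slightly larger cut-off, and hence everywhere by real induction. Finally y = S - b/(m+mu)
   and y = b/m - S satisfy y' >= -c y, so their negative parts decay exponentially, which gives the
   liminf and limsup bounds. *)

From Stdlib Require Import Reals Lra Classical.
From Coquelicot Require Import Coquelicot.
Open Scope R_scope.
Set Bullet Behavior "Strict Subproofs".

(** * Real analysis *)

Lemma pow2_gt0 k : 0 < 2 ^ k.
Proof. apply pow_lt; lra. Qed.

Lemma INR_le_pow2 k : INR k <= 2 ^ k.
Proof.
  induction k as [|k IH]; [simpl; lra|].
  rewrite S_INR; simpl. assert (1 <= 2 ^ k) by (clear IH; induction k; simpl; lra). lra.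
Qed.

Lemma pow2_small A eps : 0 < eps -> exists k, A / 2 ^ k < eps.
Proof.
  intros He. destruct (INR_archimed eps A He) as [k Hk]. exists k.
  pose proof (pow2_gt0 k). pose proof (INR_le_pow2 k).
  apply Rmult_lt_reg_r with (2 ^ k); [lra|].
  unfold Rdiv. rewrite Rmult_assoc, Rinv_l by lra. nra.
Qed.

Lemma le_of_le_add_pow2 a b Q : (forall k, a <= b + Q / 2 ^ k) -> a <= b.
Proof.
  intros H. destruct (Rle_dec a b) as [|Hab]; [assumption|].
  destruct (pow2_small Q (a - b)) as [k Hk]; [lra|]. specialize (H k). lra.
Qed.

Lemma le_of_le_add_eps x y : (forall eps, 0 < eps -> x <= y + eps) -> x <= y.
Proof. intros H. destruct (Rle_dec x y); [assumption|]. specialize (H ((x - y) / 2)). lra. Qed.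

Lemma pow2_increments_bound (u : nat -> R) A :
  (forall k, Rabs (u (S k) - u k) <= A / 2 ^ k) ->
  forall k l, (k <= l)%nat -> Rabs (u l - u k) <= 2 * A / 2 ^ k - 2 * A / 2 ^ l.
Proof.
  intros H k l Hkl. induction Hkl as [|l _ IH].
  - rewrite Rminus_diag, Rabs_R0. lra.
  - specialize (H l). pose proof (pow2_gt0 l). simpl pow.
    replace (u (S l) - u k) with ((u (S l) - u l) + (u l - u k)) by ring.
    eapply Rle_trans; [apply Rabs_triang|].
    replace (2 * A / (2 * 2 ^ l)) with (A / 2 ^ l) by (field; lra).
    replace (2 * A / 2 ^ l) with (A / 2 ^ l + A / 2 ^ l) in IH by (field; lra). lra.
Qed.

Definition seq_lim (u : nat -> R) : R := real (Lim_seq u).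

Lemma seq_lim_pow2_tail (u : nat -> R) A :
  (forall k, Rabs (u (S k) - u k) <= A / 2 ^ k) ->
  forall k, Rabs (seq_lim u - u k) <= 2 * A / 2 ^ k.
Proof.
  intros H. pose proof (pow2_increments_bound u A H) as HC.
  assert (HA : 0 <= A).
  { specialize (H 0%nat). simpl in H. pose proof (Rabs_pos (u 1%nat - u 0%nat)). lra. }
  assert (Htail : forall k, 0 <= 2 * A / 2 ^ k).
  { intros k. pose proof (pow2_gt0 k). apply Rdiv_le_0_compat; lra. }
  assert (Hex : ex_finite_lim_seq u).
  { apply ex_lim_seq_cauchy_corr. intros eps.
    destruct (pow2_small (4 * A) eps (cond_pos eps)) as [k Hk]. exists k.
    intros l l' Hl Hl'. pose proof (HC k l Hl). pose proof (HC k l' Hl').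
    pose proof (Htail l). pose proof (Htail l'). pose proof (pow2_gt0 k).
    replace (u l - u l') with ((u l - u k) - (u l' - u k)) by ring.
    eapply Rle_lt_trans; [apply Rabs_triang|]. rewrite Rabs_Ropp.
    replace (4 * A / 2 ^ k) with (2 * A / 2 ^ k + 2 * A / 2 ^ k) in Hk by (field; lra). lra. }
  destruct Hex as [l Hl].
  assert (Hs : seq_lim u = l) by (unfold seq_lim; rewrite (is_lim_seq_unique _ _ Hl); reflexivity).
  rewrite Hs. intros k.
  apply le_of_le_add_eps. intros eps He.
  apply is_lim_seq_spec in Hl. destruct (Hl (mkposreal _ He)) as [N HN]. simpl in HN.
  specialize (HN (max N k) (Nat.le_max_l _ _)). specialize (HC k (max N k) (Nat.le_max_r _ _)).
  pose proof (Htail (max N k)).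
  replace (l - u k) with ((u (max N k) - u k) - (u (max N k) - l)) by ring.
  eapply Rle_trans; [apply Rabs_triang|]. rewrite Rabs_Ropp. lra.
Qed.

Lemma lipschitz_continuity_pt (f : R -> R) C x : 0 <= C ->
  (forall s, Rabs (f s - f x) <= C * Rabs (s - x)) -> continuity_pt f x.
Proof.
  intros HC H eps He. exists (eps / (C + 1)). split; [apply Rdiv_lt_0_compat; lra|].
  intros y [_ Hy]. simpl in *. unfold R_dist in *. eapply Rle_lt_trans; [apply H|].
  apply Rle_lt_trans with (C * (eps / (C + 1))); [apply Rmult_le_compat_l; lra|].
  replace (C * (eps / (C + 1))) with (eps * (C / (C + 1))) by (field; lra).
  assert (C / (C + 1) < 1).
  { apply Rmult_lt_reg_r with (C + 1); [lra|]. unfold Rdiv. rewrite Rmult_assoc, Rinv_l by lra. lra. }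
  nra.
Qed.

Lemma lipschitz_continuous (f : R -> R) C x : 0 <= C ->
  (forall s, Rabs (f s - f x) <= C * Rabs (s - x)) -> continuous f x.
Proof. intros. apply continuity_pt_filterlim. eapply lipschitz_continuity_pt; eauto. Qed.

Lemma lipschitz_ex_RInt (f : R -> R) C a b : 0 <= C ->
  (forall s t, Rabs (f s - f t) <= C * Rabs (s - t)) -> ex_RInt f a b.
Proof.
  intros HC H. apply (ex_RInt_continuous (V := R_CompleteNormedModule)).
  intros z _. eapply lipschitz_continuous; eauto.
Qed.

Lemma RInt_diff_le (g : R -> R) C K a b : 0 <= C ->
  (forall s t, Rabs (g s - g t) <= C * Rabs (s - t)) -> (forall s, Rabs (g s) <= K) ->
  Rabs (RInt g 0 a - RInt g 0 b) <= K * Rabs (a - b).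
Proof.
  intros HC Hl HK.
  assert (Hex : forall u v, ex_RInt g u v) by (intros; eapply lipschitz_ex_RInt; eauto).
  assert (E : RInt g 0 a - RInt g 0 b = RInt g b a).
  { rewrite <- (RInt_Chasles g 0 b a) by auto.
    change (plus (RInt g 0 b) (RInt g b a)) with (RInt g 0 b + RInt g b a). ring. }
  rewrite E, Rmult_comm. destruct (Rle_dec b a).
  - rewrite (Rabs_right (a - b)) by lra. apply abs_RInt_le_const; auto.
  - rewrite <- opp_RInt_swap by auto. change (opp (RInt g a b)) with (- RInt g a b).
    rewrite Rabs_Ropp, (Rabs_left1 (a - b)) by lra. replace (- (a - b)) with (b - a) by ring.
    apply abs_RInt_le_const; auto; lra.
Qed.

Lemma RInt_abs_le (g h : R -> R) T : 0 <= T -> ex_RInt g 0 T -> ex_RInt h 0 T ->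
  (forall s, 0 < s < T -> Rabs (g s) <= h s) -> Rabs (RInt g 0 T) <= RInt h 0 T.
Proof.
  intros HT Hg Hh H. apply Rabs_le. split.
  - assert (Hoh : ex_RInt (fun s => - h s) 0 T) by exact (ex_RInt_opp (V := R_CompleteNormedModule) h 0 T Hh).
    assert (E : RInt (fun s => - h s) 0 T = - RInt h 0 T).
    { change (RInt (fun s => opp (h s)) 0 T = opp (RInt h 0 T)).
      exact (RInt_opp (V := R_CompleteNormedModule) h 0 T Hh). }
    rewrite <- E. apply RInt_le; auto. intros x Hx. specialize (H x Hx). apply Rabs_le_between in H. lra.
  - apply RInt_le; auto. intros x Hx. specialize (H x Hx). apply Rabs_le_between in H. lra.
Qed.

Lemma is_derive_scal_exp c lam x : is_derive (fun s => c * exp (lam * s)) x (c * (lam * exp (lam * x))).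
Proof. auto_derive; auto. ring. Qed.

Lemma ex_RInt_scal_exp c lam a b : ex_RInt (fun s => c * exp (lam * s)) a b.
Proof.
  apply (ex_RInt_continuous (V := R_CompleteNormedModule)). intros x _.
  apply continuity_pt_filterlim, derivable_continuous_pt.
  eexists. apply is_derive_Reals, is_derive_scal_exp.
Qed.

Lemma RInt_scal_exp c lam T : 0 < lam ->
  RInt (fun s => c * exp (lam * s)) 0 T = c * (exp (lam * T) - 1) / lam.
Proof.
  intros Hl. apply is_RInt_unique.
  replace (c * (exp (lam * T) - 1) / lam) with (minus (c / lam * exp (lam * T)) (c / lam * exp (lam * 0))).
  2:{ rewrite Rmult_0_r, exp_0. change (c / lam * exp (lam * T) - c / lam * 1 = c * (exp (lam * T) - 1) / lam).
      field. lra. }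
  apply (is_RInt_derive (fun s => c / lam * exp (lam * s))).
  - intros x _. auto_derive; auto. field. lra.
  - intros x _. apply continuity_pt_filterlim, derivable_continuous_pt.
    eexists. apply is_derive_Reals, is_derive_scal_exp.
Qed.

Lemma Rmax0_ge0 t : 0 <= Rmax 0 t.
Proof. apply Rmax_l. Qed.

Lemma Rmax0_id t : 0 <= t -> Rmax 0 t = t.
Proof. apply Rmax_right. Qed.

Lemma Rmax0_lipschitz t s : Rabs (Rmax 0 t - Rmax 0 s) <= Rabs (t - s).
Proof. unfold Rmax; destruct (Rle_dec 0 t), (Rle_dec 0 s); unfold Rabs; repeat destruct Rcase_abs; lra. Qed.

Lemma exp_le_exp a b : a <= b -> exp a <= exp b.
Proof. intros [H|H]; [left; apply exp_increasing; assumption | subst; lra]. Qed.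

Lemma MVT_open (f df : R -> R) a b : a < b ->
  (forall c, a <= c <= b -> continuity_pt f c) ->
  (forall c, a < c < b -> derivable_pt_lim f c (df c)) ->
  exists c, a < c < b /\ f b - f a = df c * (b - a).
Proof.
  intros Hab Hc Hd.
  assert (pr1 : forall c, a < c < b -> derivable_pt f c) by (intros c Hc'; exists (df c); apply Hd; auto).
  assert (pr2 : forall c, a < c < b -> derivable_pt id c) by (intros; apply derivable_pt_id).
  destruct (MVT f id a b pr1 pr2 Hab Hc) as [c [Hc' Heq]].
  { intros; apply derivable_continuous_pt, derivable_pt_id. }
  exists c. split; [assumption|].
  rewrite (derive_pt_eq_0 f c (df c) (pr1 c Hc') (Hd c Hc')) in Heq.
  rewrite (derive_pt_eq_0 id c 1 (pr2 c Hc') (derivable_pt_lim_id c)) in Heq. unfold id in Heq. lra.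
Qed.

Definition right_cont (f : R -> R) (a : R) : Prop :=
  forall eps, 0 < eps -> exists d, 0 < d /\ forall v, a <= v < a + d -> Rabs (f v - f a) < eps.

Lemma continuity_pt_right_cont f a : continuity_pt f a -> right_cont f a.
Proof.
  intros Hc eps He. destruct (Hc eps He) as [d [Hd Hf]]. exists d. split; [assumption|].
  intros v Hv. destruct (Req_dec v a) as [->|Hva]; [rewrite Rminus_diag, Rabs_R0; lra|].
  apply (Hf v). split; [split; [exact I | auto]|]. simpl. unfold R_dist. rewrite Rabs_right; lra.
Qed.

Lemma right_cont_minus f g a : right_cont f a -> right_cont g a -> right_cont (fun v => f v - g v) a.
Proof.
  intros Hf Hg eps He. destruct (Hf (eps / 2)) as [d [Hd Hfd]]; [lra|].
  destruct (Hg (eps / 2)) as [d' [Hd' Hgd]]; [lra|].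
  exists (Rmin d d'). split; [apply Rmin_pos; assumption|]. intros v Hv.
  pose proof (Rmin_l d d'). pose proof (Rmin_r d d').
  specialize (Hfd v ltac:(lra)). specialize (Hgd v ltac:(lra)).
  replace (f v - g v - (f a - g a)) with ((f v - f a) - (g v - g a)) by ring.
  eapply Rle_lt_trans; [apply Rabs_triang|]. rewrite Rabs_Ropp. lra.
Qed.

Lemma limit1_in_of_continuity_pt (f : R -> R) : continuity_pt f 0 -> limit1_in f (fun t => 0 < t) (f 0) 0.
Proof.
  intros Hc eps He. destruct (Hc eps He) as [d [Hd0 Hd1]]. exists d. split; [assumption|].
  intros x [Hx Hdx]. apply Hd1. split; [split; [exact I | lra] | assumption].
Qed.

Lemma right_cont_of_limit1_in (f : R -> R) : limit1_in f (fun t => 0 < t) (f 0) 0 -> right_cont f 0.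
Proof.
  intros Hl eps He. destruct (Hl eps He) as [d [Hd0 Hd1]]. exists d. split; [assumption|].
  intros v Hv. destruct (Req_dec v 0) as [->|Hv0]; [rewrite Rminus_diag, Rabs_R0; lra|].
  apply (Hd1 v). split; [lra|]. simpl. unfold R_dist. rewrite Rminus_0_r, Rabs_right; lra.
Qed.

Lemma eq0_of_continuity_left (f : R -> R) s : 0 < s -> continuity_pt f s ->
  (forall u, 0 <= u < s -> f u = 0) -> f s = 0.
Proof.
  intros Hs Hc H0. destruct (Req_dec (f s) 0) as [|Hne]; [assumption|]. exfalso.
  destruct (Hc (Rabs (f s))) as [d [Hd0 Hd1]]; [apply Rabs_pos_lt; assumption|].
  set (v := s - Rmin d s / 2).
  assert (Hv : 0 <= v < s /\ Rabs (v - s) < d) by (unfold v, Rmin; destruct Rle_dec; rewrite Rabs_left; lra).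
  assert (Hlt : Rabs (f v - f s) < Rabs (f s)).
  { apply Hd1. split; [split; [exact I | lra] | apply Hv]. }
  rewrite (H0 v (proj1 Hv)), Rminus_0_l, Rabs_Ropp in Hlt. lra.
Qed.

(* Apply the MVT on [a', b] and let a' tend to a. *)
Lemma MVT_right_cont_bound (f df : R -> R) a b C : a < b ->
  (forall c, a < c <= b -> continuity_pt f c) ->
  (forall c, a < c < b -> derivable_pt_lim f c (df c)) ->
  (forall c, a < c < b -> Rabs (df c) <= C) ->
  right_cont f a ->
  Rabs (f b - f a) <= C * (b - a).
Proof.
  intros Hab Hc Hd HC Hr.
  assert (C0 : 0 <= C)
    by (pose proof (HC ((a + b) / 2) ltac:(lra)); pose proof (Rabs_pos (df ((a + b) / 2))); lra).
  apply le_of_le_add_eps. intros eps He. destruct (Hr eps He) as [d [Hd0 Hd1]].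
  set (a' := a + Rmin d (b - a) / 2).
  assert (Ha' : a < a' < b /\ a' < a + d) by (unfold a', Rmin; destruct Rle_dec; lra).
  destruct (MVT_open f df a' b) as [c [Hc1 Hc2]];
    [lra | intros c Hc'; apply Hc; lra | intros c Hc'; apply Hd; lra |].
  specialize (Hd1 a' ltac:(lra)).
  assert (Rabs (f b - f a') <= C * (b - a)).
  { rewrite Hc2, Rabs_mult, (Rabs_right (b - a')) by lra.
    apply Rmult_le_compat; try apply Rabs_pos; try lra. apply HC; lra. }
  replace (f b - f a) with ((f b - f a') + (f a' - f a)) by ring.
  eapply Rle_trans; [apply Rabs_triang|]. lra.
Qed.

(* After the last time s <= t with a <= y s we have y < a, hence y' >= 0 on (s, t] and y t >= y s. *)
Lemma barrier_ge (y dy : R -> R) a :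
  (forall t, continuity_pt y t) -> (forall t, 0 < t -> derivable_pt_lim y t (dy t)) ->
  a <= y 0 -> (forall t, 0 < t -> y t < a -> 0 <= dy t) -> forall t, 0 <= t -> a <= y t.
Proof.
  intros Hc Hd H0 Hs t1 Ht1. destruct (Rle_dec a (y t1)) as [|Hn]; [assumption|]. exfalso.
  set (E := fun s => 0 <= s <= t1 /\ a <= y s).
  assert (Hb : bound E) by (exists t1; intros s [Hs' _]; lra).
  assert (He : exists s, E s) by (exists 0; split; lra).
  destruct (completeness E Hb He) as [s Hl].
  assert (Hs0 : 0 <= s) by (apply Hl; split; lra).
  assert (Hys : a <= y s).
  { destruct (Rle_dec a (y s)) as [|Hn2]; [assumption|]. exfalso.
    destruct (Hc s (a - y s)) as [d [Hd0 Hd1]]; [lra|].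
    destruct (classic (exists u, E u /\ s - d < u)) as [[u [Eu Hu]]|Hno].
    - assert (u <= s) by (apply Hl; auto). destruct (Req_dec u s) as [->|Hne]; [destruct Eu; lra|].
      destruct Eu as [_ Eu].
      assert (Hab : Rabs (y u - y s) < a - y s).
      { apply Hd1. split; [split; [exact I | intro; apply Hne; auto]|].
        simpl; unfold R_dist; rewrite Rabs_left; lra. }
      revert Hab. unfold Rabs; destruct Rcase_abs; lra.
    - assert (s <= s - d); [|lra]. apply Hl. intros u Eu.
      destruct (Rle_dec u (s - d)); [assumption|]. exfalso; apply Hno; exists u; split; auto; lra. }
  assert (Hst : s <= t1) by (apply Hl; intros u [Hu _]; lra).
  assert (Hlt : s < t1) by (destruct (Req_dec s t1); [subst; lra | lra]).
  assert (Hneg : forall u, s < u <= t1 -> y u < a).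
  { intros u Hu. destruct (Rlt_dec (y u) a) as [|Hnu]; [assumption|].
    assert (u <= s) by (apply Hl; split; lra). lra. }
  destruct (MVT_open y dy s t1 Hlt) as [c [Hc1 Hc2]];
    [intros; apply Hc | intros c Hc'; apply Hd; lra |].
  assert (0 <= dy c) by (apply Hs; [lra | apply Hneg; lra]). nra.
Qed.

Lemma barrier_le (y dy : R -> R) a :
  (forall t, continuity_pt y t) -> (forall t, 0 < t -> derivable_pt_lim y t (dy t)) ->
  y 0 <= a -> (forall t, 0 < t -> a < y t -> dy t <= 0) -> forall t, 0 <= t -> y t <= a.
Proof.
  intros Hc Hd H0 Hs t Ht.
  enough (- a <= - y t) by lra.
  apply (barrier_ge (fun s => - y s) (fun s => - dy s)); try lra; try assumption.
  - intros s. apply continuity_pt_opp, Hc.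
  - intros s Hs0. apply derivable_pt_lim_opp, Hd, Hs0.
  - intros s Hs0 Hy. pose proof (Hs s Hs0 ltac:(lra)). lra.
Qed.

(* y e^{ct} is nondecreasing. *)
Lemma exp_comparison (y dy : R -> R) c :
  (forall t, continuity_pt y t) -> (forall t, 0 < t -> derivable_pt_lim y t (dy t)) ->
  (forall t, 0 < t -> - c * y t <= dy t) -> forall t, 0 <= t -> y 0 * exp (- c * t) <= y t.
Proof.
  intros Hc Hd Hs t Ht.
  set (w := fun s => y s * exp (c * s)).
  assert (Hw : w 0 <= w t).
  { destruct (Req_dec t 0) as [->|Hne]; [lra|].
    destruct (MVT_open w (fun u => dy u * exp (c * u) + y u * (c * exp (c * u))) 0 t)
      as [u [Hu1 Hu2]]; [lra | | |].
    - intros u _. apply continuity_pt_mult; [apply Hc|].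
      apply derivable_continuous_pt. exists (c * exp (c * u)). apply is_derive_Reals. auto_derive; auto. ring.
    - intros u Hu. apply (derivable_pt_lim_mult y (fun s => exp (c * s))); [apply Hd; lra|].
      apply is_derive_Reals. auto_derive; auto. ring.
    - specialize (Hs u (proj1 Hu1)). pose proof (exp_pos (c * u)).
      assert (0 <= dy u * exp (c * u) + y u * (c * exp (c * u))) by nra. nra. }
  unfold w in Hw. rewrite Rmult_0_r, exp_0, Rmult_1_r in Hw.
  replace (y t) with (y t * exp (c * t) * exp (- c * t)).
  2:{ rewrite Rmult_assoc, <- exp_plus. replace (c * t + - c * t) with 0 by ring. rewrite exp_0; ring. }
  apply Rmult_le_compat_r; [left; apply exp_pos | assumption].
Qed.

Lemma exp_decay_eventually y0 c eps : 0 < c -> 0 < eps ->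
  exists T, forall t, T <= t -> - eps <= y0 * exp (- c * t).
Proof.
  intros Hc He. destruct (Rle_dec 0 y0).
  - exists 0. intros t _. pose proof (exp_pos (- c * t)). nra.
  - exists (- y0 / (eps * c)). intros t Ht.
    assert (0 < - y0 / (eps * c)) by (apply Rdiv_lt_0_compat; nra).
    assert (Hct : - y0 <= eps * (c * t)).
    { replace (- y0) with (eps * (c * (- y0 / (eps * c)))) by (field; lra).
      apply Rmult_le_compat_l; [lra|]. apply Rmult_le_compat_l; lra. }
    pose proof (exp_ineq1_le (c * t)). pose proof (exp_pos (c * t)).
    replace (exp (- c * t)) with (/ exp (c * t)) by (rewrite <- exp_Ropp; f_equal; ring).
    apply Rmult_le_reg_r with (exp (c * t)); [assumption|].
    rewrite Rmult_assoc, Rinv_l by lra. nra.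
Qed.

Lemma eventually_ge_of_deriv_ge (y dy : R -> R) c : 0 < c ->
  (forall t, continuity_pt y t) -> (forall t, 0 < t -> derivable_pt_lim y t (dy t)) ->
  (forall t, 0 < t -> - c * y t <= dy t) ->
  forall eps, 0 < eps -> exists T, forall t, T <= t -> - eps <= y t.
Proof.
  intros Hc Hcont Hd Hs eps He. destruct (exp_decay_eventually (y 0) c eps Hc He) as [T HT].
  exists (Rmax T 0). intros t Ht. pose proof (Rmax_l T 0). pose proof (Rmax_r T 0).
  specialize (HT t ltac:(lra)). pose proof (exp_comparison y dy c Hcont Hd Hs t ltac:(lra)). lra.
Qed.

Lemma continuous_induction (P : R -> Prop) :
  P 0 ->
  (forall s, 0 < s -> (forall u, 0 <= u < s -> P u) -> P s) ->
  (forall s, 0 <= s -> (forall u, 0 <= u <= s -> P u) ->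
     exists eta, 0 < eta /\ forall u, s <= u <= s + eta -> P u) ->
  forall t, 0 <= t -> P t.
Proof.
  intros H0 Hleft Hright t1 Ht1. destruct (classic (P t1)) as [|Hn]; [assumption|]. exfalso.
  set (E := fun s => 0 <= s /\ forall u, 0 <= u <= s -> P u).
  assert (HE0 : E 0) by (split; [lra|]; intros u Hu; replace u with 0 by lra; assumption).
  assert (Hb : bound E).
  { exists t1. intros s [Hs Hu]. destruct (Rle_dec s t1); [assumption|]. exfalso. apply Hn, Hu. lra. }
  destruct (completeness E Hb (ex_intro _ 0 HE0)) as [s Hl].
  assert (Hs0 : 0 <= s) by (apply Hl, HE0).
  assert (Hbelow : forall u, 0 <= u < s -> P u).
  { intros u Hu. destruct (classic (P u)) as [|Hnu]; [assumption|]. exfalso.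
    assert (s <= u); [|lra]. apply Hl. intros s' [_ Hs']. destruct (Rle_dec s' u); [assumption|].
    exfalso. apply Hnu, Hs'. lra. }
  assert (Hs : forall u, 0 <= u <= s -> P u).
  { intros u Hu. destruct (Req_dec u s) as [->|]; [|apply Hbelow; lra].
    destruct (Req_dec s 0) as [->|]; [assumption|]. apply Hleft; [lra | assumption]. }
  destruct (Hright s Hs0 Hs) as [eta [Heta Hext]].
  assert (s + eta <= s); [|lra]. apply Hl. split; [lra|]. intros u Hu.
  destruct (Rle_dec u s); [apply Hs; lra | apply Hext; lra].
Qed.

(** * Bounded Lipschitz vector fields on R^4 *)

Inductive coord := cB | cI | cM | cN.
Definition state := coord -> R.

Definition dist1 (u v : state) : R :=
  Rabs (u cB - v cB) + Rabs (u cI - v cI) + Rabs (u cM - v cM) + Rabs (u cN - v cN).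

Lemma coord_le_dist1 u v i : Rabs (u i - v i) <= dist1 u v.
Proof.
  unfold dist1. pose proof (Rabs_pos (u cB - v cB)). pose proof (Rabs_pos (u cI - v cI)).
  pose proof (Rabs_pos (u cM - v cM)). pose proof (Rabs_pos (u cN - v cN)). destruct i; lra.
Qed.

Lemma dist1_le u v a : (forall i, Rabs (u i - v i) <= a) -> dist1 u v <= 4 * a.
Proof.
  intros H. unfold dist1. pose proof (H cB). pose proof (H cI). pose proof (H cM). pose proof (H cN). lra.
Qed.

Lemma dist1_eq0 u v : dist1 u v <= 0 -> forall i, u i = v i.
Proof.
  intros H i. pose proof (coord_le_dist1 u v i). pose proof (Rabs_pos (u i - v i)).
  assert (Rabs (u i - v i) = 0) as Hz by lra. apply Rabs_eq_0 in Hz. lra.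
Qed.

Lemma dist1_ge0 u v : 0 <= dist1 u v.
Proof. eapply Rle_trans; [apply Rabs_pos | apply (coord_le_dist1 u v cB)]. Qed.

Lemma right_cont_state (Y : R -> state) s : (forall i, right_cont (fun v => Y v i) s) ->
  forall eps, 0 < eps -> exists d, 0 < d /\ forall v, s <= v < s + d -> forall i, Rabs (Y v i - Y s i) < eps.
Proof.
  intros H eps He.
  destruct (H cB eps He) as [d1 [? HdB]]. destruct (H cI eps He) as [d2 [? HdI]].
  destruct (H cM eps He) as [d3 [? HdM]]. destruct (H cN eps He) as [d4 [? HdN]].
  exists (Rmin (Rmin d1 d2) (Rmin d3 d4)). split; [repeat apply Rmin_pos; assumption|].
  intros v Hv. pose proof (Rmin_l (Rmin d1 d2) (Rmin d3 d4)). pose proof (Rmin_r (Rmin d1 d2) (Rmin d3 d4)).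
  pose proof (Rmin_l d1 d2). pose proof (Rmin_r d1 d2). pose proof (Rmin_l d3 d4). pose proof (Rmin_r d3 d4).
  intros i; destruct i; [apply HdB | apply HdI | apply HdM | apply HdN]; lra.
Qed.

Definition bounded_lipschitz_field (F : state -> state) (L K : R) : Prop :=
  0 <= L /\ 0 <= K /\ (forall u v i, Rabs (F u i - F v i) <= L * dist1 u v) /\
  (forall u i, Rabs (F u i) <= K).

Definition bounded_lipschitz (G : state -> R) : Prop :=
  exists L K, 0 <= L /\ 0 <= K /\ (forall u v, Rabs (G u - G v) <= L * dist1 u v) /\
    (forall u, Rabs (G u) <= K).

Lemma bounded_lipschitz_const c : bounded_lipschitz (fun _ => c).
Proof.
  exists 0, (Rabs c). repeat split; [lra | apply Rabs_pos | | intros; lra].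
  intros; rewrite Rminus_diag, Rabs_R0; lra.
Qed.

Definition clip lo hi x := Rmax lo (Rmin hi x).

Lemma clip_id lo hi x : lo <= x <= hi -> clip lo hi x = x.
Proof. unfold clip, Rmax, Rmin; repeat destruct Rle_dec; lra. Qed.

Lemma clip_bounds lo hi x : lo <= hi -> lo <= clip lo hi x <= hi.
Proof. unfold clip, Rmax, Rmin; repeat destruct Rle_dec; lra. Qed.

Lemma bounded_lipschitz_clip lo hi i : lo <= hi -> bounded_lipschitz (fun u => clip lo hi (u i)).
Proof.
  intros H. exists 1, (Rabs lo + Rabs hi).
  pose proof (Rabs_pos lo); pose proof (Rabs_pos hi). repeat split; try lra.
  - intros u v. rewrite Rmult_1_l. apply Rle_trans with (Rabs (u i - v i)); [|apply coord_le_dist1].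
    unfold clip, Rmax, Rmin; repeat destruct Rle_dec; unfold Rabs; repeat destruct Rcase_abs; lra.
  - intros u. pose proof (clip_bounds lo hi (u i) H). unfold Rabs; repeat destruct Rcase_abs; lra.
Qed.

Lemma bounded_lipschitz_add G1 G2 :
  bounded_lipschitz G1 -> bounded_lipschitz G2 -> bounded_lipschitz (fun u => G1 u + G2 u).
Proof.
  intros [L1 [K1 [? [? [H1 H2]]]]] [L2 [K2 [? [? [H3 H4]]]]]. exists (L1 + L2), (K1 + K2).
  repeat split; try lra.
  - intros u v. replace (G1 u + G2 u - (G1 v + G2 v)) with ((G1 u - G1 v) + (G2 u - G2 v)) by ring.
    eapply Rle_trans; [apply Rabs_triang|]. specialize (H1 u v). specialize (H3 u v). lra.
  - intros u. eapply Rle_trans; [apply Rabs_triang|]. specialize (H2 u). specialize (H4 u). lra.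
Qed.

Lemma bounded_lipschitz_opp G : bounded_lipschitz G -> bounded_lipschitz (fun u => - G u).
Proof.
  intros [L [K [? [? [H1 H2]]]]]. exists L, K. repeat split; auto.
  - intros u v. replace (- G u - - G v) with (- (G u - G v)) by ring. rewrite Rabs_Ropp; auto.
  - intros u. rewrite Rabs_Ropp; auto.
Qed.

Lemma bounded_lipschitz_sub G1 G2 :
  bounded_lipschitz G1 -> bounded_lipschitz G2 -> bounded_lipschitz (fun u => G1 u - G2 u).
Proof. intros. apply (bounded_lipschitz_add G1 (fun u => - G2 u)); auto. apply bounded_lipschitz_opp; auto. Qed.

Lemma bounded_lipschitz_mul G1 G2 :
  bounded_lipschitz G1 -> bounded_lipschitz G2 -> bounded_lipschitz (fun u => G1 u * G2 u).
Proof.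
  intros [L1 [K1 [? [? [H1 H2]]]]] [L2 [K2 [? [? [H3 H4]]]]]. exists (K1 * L2 + K2 * L1), (K1 * K2).
  repeat split; try nra.
  - intros u v. replace (G1 u * G2 u - G1 v * G2 v) with (G1 u * (G2 u - G2 v) + G2 v * (G1 u - G1 v)) by ring.
    eapply Rle_trans; [apply Rabs_triang|]. rewrite !Rabs_mult.
    specialize (H1 u v). specialize (H3 u v). specialize (H2 u). specialize (H4 v).
    assert (Rabs (G1 u) * Rabs (G2 u - G2 v) <= K1 * (L2 * dist1 u v))
      by (apply Rmult_le_compat; auto; apply Rabs_pos).
    assert (Rabs (G2 v) * Rabs (G1 u - G1 v) <= K2 * (L1 * dist1 u v))
      by (apply Rmult_le_compat; auto; apply Rabs_pos).
    lra.
  - intros u. rewrite Rabs_mult. apply Rmult_le_compat; auto; apply Rabs_pos.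
Qed.

Lemma bounded_lipschitz_max c G : bounded_lipschitz G -> bounded_lipschitz (fun u => Rmax c (G u)).
Proof.
  intros [L [K [? [? [H1 H2]]]]]. exists L, (K + Rabs c). pose proof (Rabs_pos c). repeat split; try lra.
  - intros u v. eapply Rle_trans; [|apply H1].
    unfold Rmax; repeat destruct Rle_dec; unfold Rabs; repeat destruct Rcase_abs; lra.
  - intros u. specialize (H2 u). revert H2.
    unfold Rmax; repeat destruct Rle_dec; unfold Rabs; repeat destruct Rcase_abs; lra.
Qed.

Lemma bounded_lipschitz_inv G c : 0 < c -> (forall u, c <= G u) ->
  bounded_lipschitz G -> bounded_lipschitz (fun u => / G u).
Proof.
  intros Hc Hg [L [K [? [? [H1 H2]]]]]. exists (L / (c * c)), (/ c). repeat split.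
  - apply Rdiv_le_0_compat; nra.
  - left; apply Rinv_0_lt_compat; auto.
  - intros u v. pose proof (Hg u). pose proof (Hg v).
    replace (/ G u - / G v) with ((G v - G u) / (G u * G v)) by (field; lra).
    unfold Rdiv. rewrite Rabs_mult, Rabs_inv, <- Rabs_Ropp, Ropp_minus_distr.
    rewrite (Rabs_right (G u * G v)) by nra.
    assert (/ (G u * G v) <= / (c * c)) by (apply Rinv_le_contravar; nra).
    pose proof (H1 u v). pose proof (Rabs_pos (G u - G v)).
    replace (L * / (c * c) * dist1 u v) with (L * dist1 u v * / (c * c)) by ring.
    apply Rmult_le_compat; auto. left; apply Rinv_0_lt_compat; nra.
  - intros u. pose proof (Hg u). rewrite Rabs_inv, Rabs_right by lra. apply Rinv_le_contravar; lra.
Qed.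

Lemma bounded_lipschitz_field_of_coords (F : state -> state) :
  (forall i, bounded_lipschitz (fun u => F u i)) -> exists L K, bounded_lipschitz_field F L K.
Proof.
  intros H. destruct (H cB) as [L1 [K1 [? [? [HB1 HB2]]]]]. destruct (H cI) as [L2 [K2 [? [? [HI1 HI2]]]]].
  destruct (H cM) as [L3 [K3 [? [? [HM1 HM2]]]]]. destruct (H cN) as [L4 [K4 [? [? [HN1 HN2]]]]].
  exists (L1 + L2 + L3 + L4), (K1 + K2 + K3 + K4). repeat split; try lra.
  - intros u v i. pose proof (Rabs_pos (u cB - v cB)). pose proof (coord_le_dist1 u v cB).
    destruct i; [specialize (HB1 u v) | specialize (HI1 u v) | specialize (HM1 u v)
                | specialize (HN1 u v)]; nra.
  - intros u i.
    destruct i; [specialize (HB2 u) | specialize (HI2 u) | specialize (HM2 u) | specialize (HN2 u)]; lra.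
Qed.

Lemma clip_below lo hi x : lo <= hi -> x < lo -> clip lo hi x = lo.
Proof. unfold clip, Rmax, Rmin; repeat destruct Rle_dec; lra. Qed.

Lemma clip0_Rmin hi x : 0 <= hi -> 0 <= x -> clip 0 hi x = Rmin hi x.
Proof. unfold clip, Rmax, Rmin; repeat destruct Rle_dec; lra. Qed.

(** * Picard iteration *)

Section Picard.

Variables (F : state -> state) (L K : R).
Hypothesis HF : bounded_lipschitz_field F L K.
Variable x0 : state.

(* Integrating up to [Rmax 0 t] freezes the iterates for t <= 0, so they are globally Lipschitz in time. *)
Fixpoint picard (k : nat) (t : R) : state :=
  match k with
  | O => x0
  | S k => fun i => x0 i + RInt (fun s => F (picard k s) i) 0 (Rmax 0 t)
  end.

Lemma picard_S k t i : picard (S k) t i = x0 i + RInt (fun s => F (picard k s) i) 0 (Rmax 0 t).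
Proof. reflexivity. Qed.

Definition time_lipschitz (y : R -> state) : Prop :=
  forall t s j, Rabs (y t j - y s j) <= K * Rabs (t - s).

Lemma F_comp_lipschitz y : time_lipschitz y ->
  forall i s t, Rabs (F (y s) i - F (y t) i) <= 4 * K * L * Rabs (s - t).
Proof.
  intros Hy i s t. destruct HF as [HL [HK [Hl _]]].
  eapply Rle_trans; [apply Hl|].
  replace (4 * K * L * Rabs (s - t)) with (L * (4 * (K * Rabs (s - t)))) by ring.
  apply Rmult_le_compat_l; [assumption|]. apply dist1_le. intros j. apply Hy.
Qed.

Lemma ex_RInt_F_comp y : time_lipschitz y -> forall i a b, ex_RInt (fun s => F (y s) i) a b.
Proof.
  intros Hy i a b. destruct HF as [HL [HK _]].
  apply (lipschitz_ex_RInt _ (4 * K * L)); [apply Rmult_le_pos; lra|]. apply F_comp_lipschitz, Hy.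
Qed.

Lemma RInt_F_comp_diff_le (y1 y2 : R -> state) (g : R -> R) T i : 0 <= T ->
  time_lipschitz y1 -> time_lipschitz y2 -> ex_RInt g 0 T ->
  (forall s, 0 < s < T -> L * dist1 (y1 s) (y2 s) <= g s) ->
  Rabs (RInt (fun s => F (y1 s) i) 0 T - RInt (fun s => F (y2 s) i) 0 T) <= RInt g 0 T.
Proof.
  intros HT H1 H2 Hg Hle. destruct HF as [_ [_ [Hl _]]].
  pose proof (ex_RInt_F_comp y1 H1 i 0 T) as E1. pose proof (ex_RInt_F_comp y2 H2 i 0 T) as E2.
  pose proof (RInt_minus (V := R_CompleteNormedModule) _ _ 0 T E1 E2) as Hm. simpl in Hm.
  change (RInt (fun s => F (y1 s) i - F (y2 s) i) 0 T =
          RInt (fun s => F (y1 s) i) 0 T - RInt (fun s => F (y2 s) i) 0 T) in Hm.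
  rewrite <- Hm. apply RInt_abs_le; auto.
  - apply (ex_RInt_minus (V := R_CompleteNormedModule)); assumption.
  - intros s Hs. eapply Rle_trans; [apply Hl | apply Hle, Hs].
Qed.

Lemma picard_time_lipschitz k : time_lipschitz (picard k).
Proof.
  destruct HF as [HL [HK [_ Hb]]].
  induction k as [|k IH]; intros t s i.
  - simpl. rewrite Rminus_diag, Rabs_R0. apply Rmult_le_pos; [assumption | apply Rabs_pos].
  - rewrite !picard_S.
    replace (x0 i + RInt (fun u => F (picard k u) i) 0 (Rmax 0 t) -
             (x0 i + RInt (fun u => F (picard k u) i) 0 (Rmax 0 s)))
      with (RInt (fun u => F (picard k u) i) 0 (Rmax 0 t) - RInt (fun u => F (picard k u) i) 0 (Rmax 0 s))
      by ring.
    eapply Rle_trans.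
    + apply (RInt_diff_le _ (4 * K * L));
        [apply Rmult_le_pos; lra | apply F_comp_lipschitz, IH | intros; apply Hb].
    + apply Rmult_le_compat_l; [assumption | apply Rmax0_lipschitz].
Qed.

Definition growth := 8 * L + 1.

Definition envelope (t : R) := 4 * K * exp (growth * Rmax 0 t).

Lemma envelope_mono s t : s <= t -> envelope s <= envelope t.
Proof.
  intros Hst. destruct HF as [HL [HK _]]. unfold envelope, growth.
  apply Rmult_le_compat_l; [lra|]. apply exp_le_exp, Rmult_le_compat_l; [lra|].
  unfold Rmax; repeat destruct Rle_dec; lra.
Qed.

Lemma picard_increment k t : dist1 (picard (S k) t) (picard k t) <= envelope t / 2 ^ k.
Proof.
  destruct HF as [HL [HK [Hl Hb]]]. unfold envelope.
  assert (Hg : 1 <= growth) by (unfold growth; lra).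
  revert t; induction k as [|k IH]; intros t; set (T := Rmax 0 t); assert (HT : 0 <= T) by apply Rmax0_ge0.
  - simpl pow. rewrite Rdiv_1_r, Rmult_assoc. apply dist1_le. intros i. simpl. fold T.
    replace (x0 i + RInt (fun _ => F x0 i) 0 T - x0 i) with (0 + RInt (fun _ => F x0 i) 0 T) by ring.
    rewrite Rplus_0_l.
    eapply Rle_trans; [apply abs_RInt_le_const; [assumption | apply ex_RInt_const | intros; apply Hb]|].
    pose proof (exp_ineq1_le T). pose proof (exp_le_exp T (growth * T) ltac:(nra)). nra.
  - set (E := exp (growth * T)). pose proof (pow2_gt0 k).
    assert (HE : 1 <= E) by (unfold E; rewrite <- exp_0; apply exp_le_exp; nra).
    assert (Hq : 0 <= K / 2 ^ k) by (apply Rdiv_le_0_compat; lra).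
    apply Rle_trans with (4 * (L * (4 * K / 2 ^ k) * (E - 1) / growth)).
    + apply dist1_le. intros i. rewrite (picard_S (S k)), (picard_S k). fold T.
      replace (x0 i + RInt (fun s => F (picard (S k) s) i) 0 T - (x0 i + RInt (fun s => F (picard k s) i) 0 T))
        with (RInt (fun s => F (picard (S k) s) i) 0 T - RInt (fun s => F (picard k s) i) 0 T) by ring.
      unfold E. rewrite <- RInt_scal_exp by lra.
      apply RInt_F_comp_diff_le; [assumption | apply picard_time_lipschitz | apply picard_time_lipschitz
                                 | apply ex_RInt_scal_exp |].
      intros s Hs. pose proof (IH s) as Hk. rewrite Rmax0_id in Hk by lra.
      replace (L * (4 * K / 2 ^ k) * exp (growth * s)) with (L * (4 * K * exp (growth * s) / 2 ^ k))
        by (field; lra).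
      apply Rmult_le_compat_l; assumption.
    + assert (Hgr : 16 * L * (E - 1) / growth <= 2 * E).
      { unfold Rdiv. apply Rmult_le_reg_r with growth; [lra|].
        rewrite Rmult_assoc, Rinv_l by lra. unfold growth. nra. }
      replace (4 * (L * (4 * K / 2 ^ k) * (E - 1) / growth)) with ((K / 2 ^ k) * (16 * L * (E - 1) / growth))
        by (field; lra).
      replace (4 * K * E / 2 ^ S k) with ((K / 2 ^ k) * (2 * E)) by (simpl; field; lra).
      apply Rmult_le_compat_l; assumption.
Qed.

Definition sol (t : R) : state := fun i => seq_lim (fun k => picard k t i).

Lemma sol_tail t i k : Rabs (sol t i - picard k t i) <= 2 * envelope t / 2 ^ k.
Proof.
  apply (seq_lim_pow2_tail (fun k => picard k t i) (envelope t)).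
  intros l. eapply Rle_trans; [apply coord_le_dist1 | apply picard_increment].
Qed.

Lemma sol_time_lipschitz : time_lipschitz sol.
Proof.
  intros t s i. apply (le_of_le_add_pow2 _ _ (2 * envelope t + 2 * envelope s)). intros k.
  pose proof (sol_tail t i k). pose proof (sol_tail s i k). pose proof (picard_time_lipschitz k t s i).
  pose proof (pow2_gt0 k).
  replace (sol t i - sol s i)
    with ((sol t i - picard k t i) + (picard k t i - picard k s i) - (sol s i - picard k s i)) by ring.
  eapply Rle_trans; [apply Rabs_triang|]. rewrite Rabs_Ropp.
  eapply Rle_trans; [apply Rplus_le_compat_r, Rabs_triang|].
  replace ((2 * envelope t + 2 * envelope s) / 2 ^ k) with (2 * envelope t / 2 ^ k + 2 * envelope s / 2 ^ k)
    by (field; lra).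
  lra.
Qed.

Lemma sol_integral t i : sol t i = x0 i + RInt (fun s => F (sol s) i) 0 (Rmax 0 t).
Proof.
  destruct HF as [HL [HK _]].
  set (T := Rmax 0 t). assert (HT : 0 <= T) by apply Rmax0_ge0.
  assert (HeT : envelope t = envelope T)
    by (unfold envelope, T; rewrite (Rmax0_id (Rmax 0 t)); [reflexivity | apply Rmax0_ge0]).
  enough (Rabs (sol t i - (x0 i + RInt (fun s => F (sol s) i) 0 T)) <= 0)
    by (pose proof (Rabs_pos (sol t i - (x0 i + RInt (fun s => F (sol s) i) 0 T))) as Hp;
        assert (Hz : Rabs (sol t i - (x0 i + RInt (fun s => F (sol s) i) 0 T)) = 0) by lra;
        apply Rabs_eq_0 in Hz; lra).
  apply (le_of_le_add_pow2 _ _ (envelope T + T * (L * (8 * envelope T)))). intros k.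
  pose proof (pow2_gt0 k).
  pose proof (sol_tail t i (S k)) as Ht. rewrite picard_S in Ht. fold T in Ht.
  assert (Hd : Rabs (RInt (fun s => F (picard k s) i) 0 T - RInt (fun s => F (sol s) i) 0 T)
               <= T * (L * (8 * envelope T / 2 ^ k))).
  { replace (T * (L * (8 * envelope T / 2 ^ k))) with (RInt (fun _ => L * (8 * envelope T / 2 ^ k)) 0 T)
      by (rewrite RInt_const; simpl; unfold scal; simpl; unfold mult; simpl; ring).
    apply RInt_F_comp_diff_le; [assumption | apply picard_time_lipschitz | apply sol_time_lipschitz
                               | apply ex_RInt_const |].
    intros s Hs. apply Rmult_le_compat_l; [assumption|].
    replace (8 * envelope T / 2 ^ k) with (4 * (2 * envelope T / 2 ^ k)) by (field; lra).
    apply dist1_le. intros j. rewrite <- Rabs_Ropp, Ropp_minus_distr.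
    eapply Rle_trans; [apply sol_tail|].
    apply Rmult_le_compat_r; [left; apply Rinv_0_lt_compat; assumption|].
    apply Rmult_le_compat_l; [lra | apply envelope_mono; lra]. }
  replace (sol t i - (x0 i + RInt (fun s => F (sol s) i) 0 T))
    with ((sol t i - (x0 i + RInt (fun s => F (picard k s) i) 0 T))
          + (RInt (fun s => F (picard k s) i) 0 T - RInt (fun s => F (sol s) i) 0 T)) by ring.
  eapply Rle_trans; [apply Rabs_triang|]. rewrite HeT in Ht. simpl pow in Ht.
  replace ((envelope T + T * (L * (8 * envelope T))) / 2 ^ k)
    with (2 * envelope T / (2 * 2 ^ k) + T * (L * (8 * envelope T / 2 ^ k))) by (field; lra).
  lra.
Qed.

Lemma sol_init i : sol 0 i = x0 i.
Proof.
  rewrite sol_integral, Rmax0_id, RInt_point by lra.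
  change (zero : R_CompleteNormedModule) with 0. ring.
Qed.

Lemma sol_continuity i t : continuity_pt (fun s => sol s i) t.
Proof.
  destruct HF as [_ [HK _]].
  apply (lipschitz_continuity_pt _ K); [assumption|]. intros; apply sol_time_lipschitz.
Qed.

Lemma sol_derive i t : 0 < t -> derivable_pt_lim (fun s => sol s i) t (F (sol t) i).
Proof.
  intros Ht. destruct HF as [HL [HK _]].
  set (G := fun s => F (sol s) i).
  apply is_derive_Reals.
  apply (is_derive_ext_loc (fun s => x0 i + RInt G 0 s)).
  { apply (filter_imp (fun u => 0 < u)); [|apply (open_gt 0); assumption].
    intros u Hu. rewrite (sol_integral u i), Rmax0_id by lra. reflexivity. }
  apply is_derive_Reals.
  replace (F (sol t) i) with (0 + G t) by (unfold G; ring).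
  apply (derivable_pt_lim_plus (fun _ => x0 i) (fun s => RInt G 0 s)); [apply derivable_pt_lim_const|].
  apply is_derive_Reals, (is_derive_RInt G (fun s => RInt G 0 s) 0).
  - apply filter_forall. intros u.
    exact (RInt_correct (V := R_CompleteNormedModule) G 0 u (ex_RInt_F_comp sol sol_time_lipschitz i 0 u)).
  - apply (lipschitz_continuous _ (4 * K * L)); [apply Rmult_le_pos; lra|].
    intros s. apply F_comp_lipschitz, sol_time_lipschitz.
Qed.

End Picard.

(* With 8 L eta <= 1 the mean value inequality turns a bound U on |Y - X| into U / 2; iterate. *)
Lemma local_uniqueness (G : state -> state) L K (X Y : R -> state) s eta U :
  bounded_lipschitz_field G L K -> 0 < eta -> 8 * L * eta <= 1 ->
  (forall i, Y s i = X s i) ->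
  (forall i, right_cont (fun v => Y v i - X v i) s) ->
  (forall i v, s < v <= s + eta ->
     derivable_pt_lim (fun w => X w i) v (G (X v) i) /\ derivable_pt_lim (fun w => Y w i) v (G (Y v) i)) ->
  (forall v, s <= v <= s + eta -> dist1 (Y v) (X v) <= U) ->
  forall v, s <= v <= s + eta -> forall i, Y v i = X v i.
Proof.
  intros [HL [_ [Hl _]]] Heta HLeta Hs Hr Hd HU.
  assert (HU0 : 0 <= U) by (apply Rle_trans with (dist1 (Y s) (X s)); [apply dist1_ge0 | apply HU; lra]).
  assert (Hk : forall k v, s <= v <= s + eta -> dist1 (Y v) (X v) <= U / 2 ^ k).
  { induction k as [|k IH]; intros v Hv; [simpl pow; rewrite Rdiv_1_r; apply HU, Hv|].
    pose proof (pow2_gt0 k). assert (0 <= U / 2 ^ k) by (apply Rdiv_le_0_compat; lra).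
    apply Rle_trans with (4 * (L * (U / 2 ^ k) * eta)).
    2:{ replace (U / 2 ^ S k) with (4 * ((U / 2 ^ k) / 8)) by (simpl; field; lra).
        apply Rmult_le_compat_l; [lra|].
        assert (U / 2 ^ k * (8 * L * eta) <= U / 2 ^ k * 1) by (apply Rmult_le_compat_l; lra). lra. }
    apply dist1_le. intros i. destruct (Req_dec v s) as [->|Hvs].
    { rewrite Hs, Rminus_diag, Rabs_R0. apply Rmult_le_pos; [apply Rmult_le_pos|]; lra. }
    replace (Y v i - X v i) with ((Y v i - X v i) - (Y s i - X s i)) by (rewrite Hs; ring).
    eapply Rle_trans.
    - apply (MVT_right_cont_bound (fun w => Y w i - X w i) (fun w => G (Y w) i - G (X w) i) s v
               (L * (U / 2 ^ k))); [lra | | | | apply Hr].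
      + intros c Hc. destruct (Hd i c ltac:(lra)) as [HX HY].
        apply continuity_pt_minus; apply derivable_continuous_pt; eexists; eassumption.
      + intros c Hc. destruct (Hd i c ltac:(lra)) as [HX HY]. apply derivable_pt_lim_minus; assumption.
      + intros c Hc. eapply Rle_trans; [apply Hl|]. apply Rmult_le_compat_l; [assumption|]. apply IH; lra.
    - apply Rmult_le_compat_l; [apply Rmult_le_pos|]; lra. }
  intros v Hv. apply dist1_eq0, (le_of_le_add_pow2 _ _ U). intros k. rewrite Rplus_0_l. apply Hk, Hv.
Qed.

Definition in_box (lo hiS hiW Smin : R) (u : state) : Prop :=
  lo <= u cB <= hiS /\ lo <= u cI <= hiS /\ lo <= u cM <= hiW /\ lo <= u cN <= hiW /\ Smin <= u cB + u cI.

Lemma in_box_enlarge hiS hiW Smin u w d : in_box 0 hiS hiW Smin u ->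
  d <= 1 -> 4 * d <= Smin -> (forall i, Rabs (w i - u i) < d) ->
  in_box (-1) (hiS + 1) (hiW + 1) (Smin / 2) w.
Proof.
  intros Hu Hd1 Hd2 Hw. pose proof (Hw cB) as HB. pose proof (Hw cI) as HI.
  pose proof (Hw cM) as HM. pose proof (Hw cN) as HN.
  apply Rabs_lt_between' in HB, HI, HM, HN. unfold in_box in *. lra.
Qed.

Lemma in_box_dist1 lo hiS hiW Smin u w : in_box lo hiS hiW Smin u -> in_box lo hiS hiW Smin w ->
  dist1 u w <= 4 * ((hiS - lo) + (hiW - lo)).
Proof.
  intros Hu Hw. unfold in_box in *. apply dist1_le. intros i.
  apply Rabs_le. destruct i; lra.
Qed.

(** * The bee-mite model *)

Section BeeMiteModel.

Variables b lam gam m mu r n p h beta delta e : R.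
Hypotheses (hb : 0 < b) (hlam : 0 < lam) (hm : 0 < m) (hmu : 0 < mu) (hr : 0 < r) (hn : 0 < n)
  (hp : 0 < p) (hh : 0 < h) (hbeta : 0 < beta) (he : 0 < e).

Definition vector_field (u : state) : state := fun i =>
  match i with
  | cB => fB b lam gam m (u cB) (u cI) (u cM) (u cN)
  | cI => fI b lam gam m mu (u cB) (u cI) (u cM) (u cN)
  | cM => fM r n p h beta delta e (u cB) (u cI) (u cM) (u cN)
  | cN => fN n p h beta delta e (u cB) (u cI) (u cM) (u cN)
  end.

Lemma vector_field_BI_sum u : u cB + u cI <> 0 ->
  vector_field u cB + vector_field u cI = b - m * (u cB + u cI) - mu * u cI.
Proof. intros H. unfold vector_field, fB, fI. field. exact H. Qed.

(* Coincides with (S) on [in_box lo hiS hiW Smin] but is bounded and globally Lipschitz. *)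
Definition cutoff_field (lo hiS hiW Smin : R) (u : state) : state :=
  let B := clip lo hiS (u cB) in
  let I := clip lo hiS (u cI) in
  let M := clip lo hiW (u cM) in
  let N := clip lo hiW (u cN) in
  let D := Rmax Smin (B + I) in
  fun i => match i with
  | cB => b * B * / D - lam * B * N - gam * B * I - m * B
  | cI => b * I * / D + lam * B * N + gam * B * I - (m + mu) * I
  | cM => r * (M + N) - n * M - p * / (h * D) * M * (M + N) - M * (beta * I + delta * N + e * B)
  | cN => - n * N - p * / (h * D) * N * (M + N) + beta * M * I + delta * M * N - e * N * B
  end.

Lemma cutoff_field_bounded_lipschitz lo hiS hiW Smin :
  lo <= hiS -> lo <= hiW -> 0 < Smin -> exists L K, bounded_lipschitz_field (cutoff_field lo hiS hiW Smin) L K.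
Proof.
  intros HS HW Hm. apply bounded_lipschitz_field_of_coords.
  pose proof (bounded_lipschitz_clip lo hiS cB HS). pose proof (bounded_lipschitz_clip lo hiS cI HS).
  pose proof (bounded_lipschitz_clip lo hiW cM HW). pose proof (bounded_lipschitz_clip lo hiW cN HW).
  set (D := fun u : state => Rmax Smin (clip lo hiS (u cB) + clip lo hiS (u cI))).
  assert (HD : forall u, Smin <= D u) by (intros; apply Rmax_l).
  assert (HDbl : bounded_lipschitz D) by (apply bounded_lipschitz_max, bounded_lipschitz_add; assumption).
  assert (bounded_lipschitz (fun u => / D u)) by (apply (bounded_lipschitz_inv _ Smin); assumption).
  assert (bounded_lipschitz (fun u => / (h * D u))).
  { apply (bounded_lipschitz_inv _ (h * Smin)); [nra | intros u; apply Rmult_le_compat_l; [lra | apply HD] |].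
    apply bounded_lipschitz_mul; [apply bounded_lipschitz_const | assumption]. }
  intros i; destruct i; unfold cutoff_field; cbv zeta;
  repeat first [ assumption | apply bounded_lipschitz_const | apply bounded_lipschitz_sub
               | apply bounded_lipschitz_add | apply bounded_lipschitz_mul | apply bounded_lipschitz_opp ].
Qed.

Lemma cutoff_field_eq lo hiS hiW Smin u : in_box lo hiS hiW Smin u ->
  forall i, cutoff_field lo hiS hiW Smin u i = vector_field u i.
Proof.
  intros [HB [HI [HM [HN HS]]]] i. unfold cutoff_field. cbv zeta.
  rewrite !(clip_id lo hiS), !(clip_id lo hiW), Rmax_right by lra.
  destruct i; unfold vector_field, fB, fI, fM, fN, Rdiv; ring.
Qed.

Section InitialValue.

Variable x0 : state.
Hypotheses (hx0 : forall i, 0 <= x0 i) (hS0 : 0 < x0 cB + x0 cI).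

Definition S_lo := Rmin (x0 cB + x0 cI) (b / (m + mu)).
Definition S_hi := Rmax (x0 cB + x0 cI) (b / m).
(* Above W_hi the logistic term of (S) dominates: (M + N)' <= (M + N) (r - p (M + N) / (h S_hi)) < 0. *)
Definition W_hi := Rmax (x0 cM + x0 cN) (r * h * S_hi / p).

Lemma S_lo_pos : 0 < S_lo.
Proof. unfold S_lo, Rmin. destruct Rle_dec; [lra | apply Rdiv_lt_0_compat; lra]. Qed.

Lemma S_lo_le : S_lo <= b / (m + mu).
Proof. apply Rmin_r. Qed.

Lemma S_hi_ge : b / m <= S_hi.
Proof. apply Rmax_r. Qed.

Lemma S0_between : S_lo <= x0 cB + x0 cI <= S_hi.
Proof. split; [apply Rmin_l | apply Rmax_l]. Qed.

Lemma S_hi_pos : 0 < S_hi.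
Proof. pose proof S_lo_pos. pose proof S0_between. lra. Qed.

Lemma W_hi_ge : r * h * S_hi / p <= W_hi.
Proof. apply Rmax_r. Qed.

Lemma W0_le : x0 cM + x0 cN <= W_hi.
Proof. apply Rmax_l. Qed.

Lemma W_hi_pos : 0 < W_hi.
Proof.
  pose proof W_hi_ge. pose proof S_hi_pos.
  assert (0 < r * h * S_hi / p) by (apply Rdiv_lt_0_compat; [apply Rmult_lt_0_compat; nra | lra]). lra.
Qed.

Definition cutoff0 := cutoff_field 0 S_hi W_hi S_lo.

Lemma cutoff0_bounded_lipschitz : exists L K, bounded_lipschitz_field cutoff0 L K.
Proof.
  pose proof S_lo_pos. pose proof S_hi_pos. pose proof W_hi_pos.
  apply cutoff_field_bounded_lipschitz; lra.
Qed.

Lemma cutoff0_coord_inward u i : u i < 0 -> 0 <= cutoff0 u i.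
Proof.
  intros Hu. pose proof S_hi_pos. pose proof W_hi_pos.
  pose proof (clip_bounds 0 S_hi (u cB) ltac:(lra)). pose proof (clip_bounds 0 S_hi (u cI) ltac:(lra)).
  pose proof (clip_bounds 0 W_hi (u cM) ltac:(lra)). pose proof (clip_bounds 0 W_hi (u cN) ltac:(lra)).
  unfold cutoff0, cutoff_field; cbv zeta. destruct i.
  - rewrite (clip_below 0 S_hi (u cB)) by lra. lra.
  - rewrite (clip_below 0 S_hi (u cI)) by lra.
    assert (0 <= lam * clip 0 S_hi (u cB) * clip 0 W_hi (u cN))
      by (apply Rmult_le_pos; [apply Rmult_le_pos|]; lra).
    lra.
  - rewrite (clip_below 0 W_hi (u cM)) by lra. nra.
  - rewrite (clip_below 0 W_hi (u cN)) by lra.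
    assert (0 <= beta * clip 0 W_hi (u cM) * clip 0 S_hi (u cI))
      by (apply Rmult_le_pos; [apply Rmult_le_pos|]; lra).
    lra.
Qed.

Lemma cutoff0_BI_sum u : 0 <= u cB -> 0 <= u cI ->
  let B := Rmin S_hi (u cB) in let I := Rmin S_hi (u cI) in
  cutoff0 u cB + cutoff0 u cI = b * (B + I) / Rmax S_lo (B + I) - m * (B + I) - mu * I.
Proof.
  intros HB HI. pose proof S_lo_pos. pose proof S_hi_pos. cbv zeta.
  unfold cutoff0, cutoff_field; cbv zeta. rewrite !clip0_Rmin by lra.
  assert (0 < Rmax S_lo (Rmin S_hi (u cB) + Rmin S_hi (u cI))) by (eapply Rlt_le_trans; [|apply Rmax_l]; lra).
  field. lra.
Qed.

Lemma cutoff0_BI_inward_low u : 0 <= u cB -> 0 <= u cI -> u cB + u cI < S_lo ->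
  0 <= cutoff0 u cB + cutoff0 u cI.
Proof.
  intros HB HI HS. pose proof S_lo_pos. pose proof S0_between. pose proof S_lo_le.
  rewrite cutoff0_BI_sum by assumption. cbv zeta.
  rewrite (Rmin_right S_hi (u cB)), (Rmin_right S_hi (u cI)), Rmax_left by lra.
  assert (Hrate : m + mu <= b / S_lo).
  { apply Rmult_le_reg_r with S_lo; [assumption|]. unfold Rdiv. rewrite Rmult_assoc, Rinv_l by lra.
    apply Rle_trans with ((m + mu) * (b / (m + mu))); [apply Rmult_le_compat_l; lra | right; field; lra]. }
  replace (b * (u cB + u cI) / S_lo - m * (u cB + u cI) - mu * u cI)
    with ((u cB + u cI) * (b / S_lo - (m + mu)) + mu * u cB) by (field; lra).
  nra.
Qed.

Lemma cutoff0_BI_inward_high u : 0 <= u cB -> 0 <= u cI -> S_hi < u cB + u cI ->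
  cutoff0 u cB + cutoff0 u cI <= 0.
Proof.
  intros HB HI HS. pose proof S_lo_pos. pose proof S0_between. pose proof S_hi_ge.
  rewrite cutoff0_BI_sum by assumption. cbv zeta.
  set (B := Rmin S_hi (u cB)). set (I := Rmin S_hi (u cI)).
  assert (Hc : S_hi <= B + I /\ 0 <= I) by (unfold B, I, Rmin; repeat destruct Rle_dec; lra).
  rewrite Rmax_right by lra. replace (b * (B + I) / (B + I)) with b by (field; lra).
  assert (b <= m * S_hi).
  { replace b with (m * (b / m)) by (field; lra). apply Rmult_le_compat_l; lra. }
  nra.
Qed.

Lemma cutoff0_MN_inward u : (forall i, 0 <= u i) -> u cB + u cI <= S_hi -> W_hi < u cM + u cN ->
  cutoff0 u cM + cutoff0 u cN <= 0.
Proof.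
  intros Hu HS HW.
  pose proof S_lo_pos. pose proof S0_between. pose proof S_hi_pos. pose proof W_hi_ge. pose proof W_hi_pos.
  pose proof (Hu cB). pose proof (Hu cI). pose proof (Hu cM). pose proof (Hu cN).
  unfold cutoff0, cutoff_field; cbv zeta. rewrite !clip0_Rmin by lra.
  rewrite (Rmin_right S_hi (u cB)), (Rmin_right S_hi (u cI)) by lra.
  set (q := Rmin W_hi (u cM) + Rmin W_hi (u cN)).
  assert (Hq : W_hi <= q) by (unfold q, Rmin; repeat destruct Rle_dec; lra).
  set (D := Rmax S_lo (u cB + u cI)).
  assert (HD : 0 < D <= S_hi) by (unfold D, Rmax; destruct Rle_dec; lra).
  assert (Hlog : r <= p * / (h * D) * q).
  { apply Rle_trans with (p * / (h * S_hi) * W_hi).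
    - replace r with (p * / (h * S_hi) * (r * h * S_hi / p)) by (field; nra).
      apply Rmult_le_compat_l; [apply Rmult_le_pos; [lra | left; apply Rinv_0_lt_compat; nra] | assumption].
    - apply Rmult_le_compat; [ | lra | | assumption].
      { apply Rmult_le_pos; [lra | left; apply Rinv_0_lt_compat; nra]. }
      apply Rmult_le_compat_l; [lra|]. apply Rinv_le_contravar; nra. }
  assert (0 <= Rmin W_hi (u cM)) by (unfold Rmin; destruct Rle_dec; lra).
  assert (0 <= Rmin W_hi (u cN)) by (unfold Rmin; destruct Rle_dec; lra).
  assert (0 <= e * u cB * q) by (apply Rmult_le_pos; [apply Rmult_le_pos|]; lra).
  assert (q * (r - p * / (h * D) * q) <= 0) by nra.
  match goal with |- ?lhs <= 0 =>
    replace lhs with (q * (r - p * / (h * D) * q) - n * q - e * u cB * q) by (unfold q; ring) end.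
  nra.
Qed.

Variables (L K : R).
Hypothesis HK : bounded_lipschitz_field cutoff0 L K.

Definition X := sol cutoff0 x0.

Lemma X_init i : X 0 i = x0 i.
Proof. exact (sol_init _ L K HK x0 i). Qed.

Lemma X_continuity i t : continuity_pt (fun s => X s i) t.
Proof. exact (sol_continuity _ L K HK x0 i t). Qed.

Lemma X_sum_continuity i j t : continuity_pt (fun s => X s i + X s j) t.
Proof. apply continuity_pt_plus; apply X_continuity. Qed.

Lemma X_sum_derive_cutoff i j t : 0 < t ->
  derivable_pt_lim (fun s => X s i + X s j) t (cutoff0 (X t) i + cutoff0 (X t) j).
Proof.
  intros Ht. apply (derivable_pt_lim_plus (fun s => X s i) (fun s => X s j));
  exact (sol_derive _ L K HK x0 _ t Ht).
Qed.

Lemma X_nonneg t : 0 <= t -> forall i, 0 <= X t i.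
Proof.
  intros Ht i.
  apply (barrier_ge (fun s => X s i) (fun s => cutoff0 (X s) i)); [apply X_continuity | | | | exact Ht].
  - intros s Hs. exact (sol_derive _ L K HK x0 i s Hs).
  - rewrite X_init. apply hx0.
  - intros s _. apply cutoff0_coord_inward.
Qed.

Lemma X_S_bounds t : 0 <= t -> S_lo <= X t cB + X t cI <= S_hi.
Proof.
  intros Ht. pose proof S0_between. split.
  - apply (barrier_ge _ _ S_lo (X_sum_continuity cB cI) (X_sum_derive_cutoff cB cI));
      [rewrite !X_init; lra | | exact Ht].
    intros s Hs. apply cutoff0_BI_inward_low; apply X_nonneg; lra.
  - apply (barrier_le _ _ S_hi (X_sum_continuity cB cI) (X_sum_derive_cutoff cB cI));
      [rewrite !X_init; lra | | exact Ht].
    intros s Hs. apply cutoff0_BI_inward_high; apply X_nonneg; lra.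
Qed.

Lemma X_W_bound t : 0 <= t -> X t cM + X t cN <= W_hi.
Proof.
  intros Ht. pose proof W0_le.
  apply (barrier_le _ _ W_hi (X_sum_continuity cM cN) (X_sum_derive_cutoff cM cN));
    [rewrite !X_init; lra | | exact Ht].
  intros s Hs. apply cutoff0_MN_inward; [apply X_nonneg; lra | apply X_S_bounds; lra].
Qed.

Lemma X_in_box t : 0 <= t -> in_box 0 S_hi W_hi S_lo (X t).
Proof.
  intros Ht. pose proof (X_nonneg t Ht) as Hn. pose proof (X_S_bounds t Ht). pose proof (X_W_bound t Ht).
  pose proof (Hn cB). pose proof (Hn cI). pose proof (Hn cM). pose proof (Hn cN). unfold in_box. lra.
Qed.

Lemma X_derive i t : 0 < t -> derivable_pt_lim (fun s => X s i) t (vector_field (X t) i).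
Proof.
  intros Ht. rewrite <- (cutoff_field_eq _ _ _ _ _ (X_in_box t ltac:(lra))).
  exact (sol_derive _ L K HK x0 i t Ht).
Qed.

Lemma X_sum_derive t : 0 < t ->
  derivable_pt_lim (fun s => X s cB + X s cI) t (b - m * (X t cB + X t cI) - mu * X t cI).
Proof.
  intros Ht. pose proof (X_S_bounds t ltac:(lra)). pose proof S_lo_pos.
  rewrite <- vector_field_BI_sum by lra.
  apply (derivable_pt_lim_plus (fun s => X s cB) (fun s => X s cI)); apply X_derive, Ht.
Qed.

Lemma X_liminf : liminf_ge (fun t => X t cB + X t cI) (b / (m + mu)).
Proof.
  intros eps He.
  destruct (eventually_ge_of_deriv_ge (fun s => X s cB + X s cI - b / (m + mu))
              (fun s => b - m * (X s cB + X s cI) - mu * X s cI - 0) (m + mu)) with (eps := eps)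
    as [T HT]; [lra | | | | exact He |].
  - intros t. apply continuity_pt_minus;
      [apply X_sum_continuity | apply continuity_pt_const; intros ? ?; reflexivity].
  - intros t Ht. apply derivable_pt_lim_minus; [apply X_sum_derive, Ht | apply derivable_pt_lim_const].
  - intros t Ht. pose proof (X_nonneg t ltac:(lra) cB).
    replace (- (m + mu) * (X t cB + X t cI - b / (m + mu)))
      with (b - m * (X t cB + X t cI) - mu * X t cI - mu * X t cB) by (field; lra).
    nra.
  - exists T. intros t Ht. specialize (HT t Ht). lra.
Qed.

Lemma X_limsup : limsup_le (fun t => X t cB + X t cI) (b / m).
Proof.
  intros eps He.
  destruct (eventually_ge_of_deriv_ge (fun s => b / m - (X s cB + X s cI))
              (fun s => 0 - (b - m * (X s cB + X s cI) - mu * X s cI)) m) with (eps := eps)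
    as [T HT]; [lra | | | | exact He |].
  - intros t. apply continuity_pt_minus;
      [apply continuity_pt_const; intros ? ?; reflexivity | apply X_sum_continuity].
  - intros t Ht. apply derivable_pt_lim_minus; [apply derivable_pt_lim_const | apply X_sum_derive, Ht].
  - intros t Ht. pose proof (X_nonneg t ltac:(lra) cI).
    replace (- m * (b / m - (X t cB + X t cI))) with (0 - (b - m * (X t cB + X t cI))) by (field; lra).
    nra.
  - exists T. intros t Ht. specialize (HT t Ht). lra.
Qed.

Section Uniqueness.

Variable Y : R -> state.
Hypotheses (hY0 : forall i, Y 0 i = x0 i)
  (hYlim : forall i, limit1_in (fun t => Y t i) (fun t => 0 < t) (x0 i) 0)
  (hYd : forall t, 0 < t -> forall i, derivable_pt_lim (fun s => Y s i) t (vector_field (Y t) i)).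

Lemma Y_right_cont i s : 0 <= s -> right_cont (fun v => Y v i) s.
Proof.
  intros Hs. destruct (Req_dec s 0) as [->|Hs0].
  - apply right_cont_of_limit1_in. rewrite hY0. apply hYlim.
  - apply continuity_pt_right_cont, derivable_continuous_pt. eexists. apply hYd. lra.
Qed.

(* Near a common point of X and Y both stay in a box around the invariant region of X, where (S) agrees
   with a second globally Lipschitz cut-off field; local uniqueness for that field applies. *)
Lemma solution_agrees_right s : 0 <= s -> (forall i, Y s i = X s i) ->
  exists eta, 0 < eta /\ forall v, s <= v <= s + eta -> forall i, Y v i = X v i.
Proof.
  intros Hs Heq. pose proof S_lo_pos. pose proof S_hi_pos. pose proof W_hi_pos.
  set (d := Rmin 1 (S_lo / 4)).
  assert (Hd : 0 < d /\ d <= 1 /\ 4 * d <= S_lo) by (unfold d, Rmin; destruct Rle_dec; lra).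
  destruct (right_cont_state Y s (fun i => Y_right_cont i s Hs) d (proj1 Hd)) as [w [Hw HYw]].
  set (G := cutoff_field (-1) (S_hi + 1) (W_hi + 1) (S_lo / 2)).
  assert (HXbox : forall v, 0 <= v -> in_box (-1) (S_hi + 1) (W_hi + 1) (S_lo / 2) (X v)).
  { intros v Hv. pose proof (X_in_box v Hv). unfold in_box in *. lra. }
  assert (HYbox : forall v, s <= v < s + w -> in_box (-1) (S_hi + 1) (W_hi + 1) (S_lo / 2) (Y v)).
  { intros v Hv. apply (in_box_enlarge _ _ _ (X s) _ d (X_in_box s Hs)); [lra | lra |].
    intros i. rewrite <- Heq. apply HYw, Hv. }
  destruct (cutoff_field_bounded_lipschitz (-1) (S_hi + 1) (W_hi + 1) (S_lo / 2)) as [LG [KG HG]];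
    [lra | lra | lra |].
  assert (HLG : 0 <= LG) by apply HG.
  exists (Rmin (w / 2) (1 / (8 * LG + 8))).
  assert (Heta : 0 < Rmin (w / 2) (1 / (8 * LG + 8))) by (apply Rmin_pos; [lra | apply Rdiv_lt_0_compat; lra]).
  split; [exact Heta|].
  assert (Hw2 : Rmin (w / 2) (1 / (8 * LG + 8)) <= w / 2) by apply Rmin_l.
  apply (local_uniqueness G LG KG X Y s _ (4 * ((S_hi + 1 - -1) + (W_hi + 1 - -1))));
    [exact HG | exact Heta | | exact Heq | | |].
  - apply Rle_trans with (8 * LG * (1 / (8 * LG + 8))); [apply Rmult_le_compat_l; [lra | apply Rmin_r]|].
    apply Rmult_le_reg_r with (8 * LG + 8); [lra|].
    unfold Rdiv. rewrite Rmult_1_l, Rmult_assoc, Rinv_l by lra. lra.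
  - intros i. apply right_cont_minus; [apply Y_right_cont, Hs | apply continuity_pt_right_cont, X_continuity].
  - intros i v Hv. unfold G. rewrite !cutoff_field_eq by (apply HXbox || apply HYbox; lra).
    split; [apply X_derive | apply hYd]; lra.
  - intros v Hv. apply (in_box_dist1 _ _ _ (S_lo / 2)); [apply HYbox | apply HXbox]; lra.
Qed.

Lemma solution_unique : forall t, 0 <= t -> forall i, Y t i = X t i.
Proof.
  apply (continuous_induction (fun t => forall i, Y t i = X t i)).
  - intros i. rewrite hY0, X_init. reflexivity.
  - intros s Hs Hbelow i.
    enough (Y s i - X s i = 0) by lra.
    apply (eq0_of_continuity_left (fun v => Y v i - X v i) s Hs).
    + apply continuity_pt_minus; [|apply X_continuity].
      apply derivable_continuous_pt. eexists. apply hYd, Hs.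
    + intros u Hu. rewrite (Hbelow u Hu i). ring.
  - intros s Hs Hupto. apply solution_agrees_right; [exact Hs | apply Hupto; lra].
Qed.

End Uniqueness.
End InitialValue.
End BeeMiteModel.

Theorem theorem1
  (b lam gam m mu r n p h beta delta e : R)
  (hb : 0 < b) (hlam : 0 < lam) (hgam : 0 < gam) (hm : 0 < m) (hmu : 0 < mu)
  (hr : 0 < r) (hn : 0 < n) (hp : 0 < p) (hh : 0 < h) (hbeta : 0 < beta)
  (hdelta : 0 < delta) (he : 0 < e)
  (B0 I0 M0 N0 : R) (hX0 : inD0 B0 I0 M0 N0) :
  exists B I M N : R -> R,
    is_solution b lam gam m mu r n p h beta delta e B0 I0 M0 N0 B I M N /\
    (forall B' I' M' N' : R -> R,
       is_solution b lam gam m mu r n p h beta delta e B0 I0 M0 N0 B' I' M' N' ->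
       forall t, 0 <= t -> B' t = B t /\ I' t = I t /\ M' t = M t /\ N' t = N t) /\
    (forall t, 0 < t -> inD0 (B t) (I t) (M t) (N t)) /\
    liminf_ge (fun t => B t + I t) (b / (m + mu)) /\
    limsup_le (fun t => B t + I t) (b / m) /\
    (exists L, 0 < L /\ forall t, 0 <= t -> M t + N t <= L).
Proof.
  destruct hX0 as [hB0 [hI0 [hM0 [hN0 hS0]]]].
  set (x0 := fun i => match i with cB => B0 | cI => I0 | cM => M0 | cN => N0 end).
  assert (hx0 : forall i, 0 <= x0 i) by (intros []; assumption).
  assert (hS : 0 < x0 cB + x0 cI) by (simpl; destruct (Req_dec (B0 + I0) 0); [contradiction | lra]).
  destruct (cutoff0_bounded_lipschitz b lam gam m mu r n p h beta delta e hb hm hmu hr hp hh x0 hS)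
    as [L [K HK]].
  set (Xt := X b lam gam m mu r n p h beta delta e x0).
  assert (Hbox : forall t, 0 <= t -> in_box 0 (S_hi b m x0) (W_hi b m r p h x0) (S_lo b m mu x0) (Xt t))
    by (intros; eapply X_in_box; eassumption).
  pose proof (S_lo_pos b m mu hb hm hmu x0 hS) as HSlo.
  exists (fun t => Xt t cB), (fun t => Xt t cI), (fun t => Xt t cM), (fun t => Xt t cN).
  assert (Hinit : forall i, Xt 0 i = x0 i) by (intros; eapply X_init; eassumption).
  assert (Hlim : forall i, limit1_in (fun t => Xt t i) (fun t => 0 < t) (x0 i) 0).
  { intros i. rewrite <- Hinit. apply limit1_in_of_continuity_pt. eapply X_continuity; eassumption. }
  split; [|split; [|split; [|split; [|split]]]].
  - repeat split; try apply Hinit; try apply Hlim; try (intros; eapply X_derive; eassumption).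
    intros t Ht Hz. pose proof (Hbox t Ht). unfold in_box in *. lra.
  - intros B' I' M' N' [HB0 [HI0 [HM0 [HN0 [HBl [HIl [HMl [HNl [_ Hd]]]]]]]]] t Ht.
    set (Y := fun t i => match i with cB => B' t | cI => I' t | cM => M' t | cN => N' t end).
    assert (HY : forall i, Y t i = Xt t i).
    { eapply (solution_unique b lam gam m mu r n p h beta delta e); try eassumption.
      - intros []; assumption.
      - intros []; assumption.
      - intros s Hs []; apply Hd, Hs. }
    repeat split; [apply (HY cB) | apply (HY cI) | apply (HY cM) | apply (HY cN)].
  - intros t Ht. pose proof (Hbox t (Rlt_le _ _ Ht)). unfold inD0, in_box in *. repeat split; lra.
  - eapply X_liminf; eassumption.
  - eapply X_limsup; eassumption.
  - exists (W_hi b m r p h x0). split; [eapply W_hi_pos; eassumption|].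
    intros t Ht. eapply X_W_bound; eassumption.
Qed.
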